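(* Let $x$ be a positive integer relatively prime to $3$. Then every element $(x_0,x_1,x_2,\dots)\in\widetilde{\mathcal{I}}_x$ has some term $x_i$ with $x_i\equiv 2\pmod 9$.
   Context: Let $T(z)=z/2$ for $z$ even and $T(z)=(3z+1)/2$ for $z$ odd. For a positive integer $x$ not divisible by $3$, $\widetilde{\mathcal{I}}_x$ is the set of infinite sequences $(x_0,x_1,x_2,\dots)$ of positive integers not divisible by $3$ such that $x_0=x$ and $T(x_{i+1})=x_i$ for all $i\ge 0$. *)

From mathcomp Require Import all_boot.
Set Implicit Arguments. Unset Strict Implicit. Unset Printing Implicit Defensive.

Definition T (z : nat) : nat := if odd z then (3 * z + 1)./2 else z./2.

(* The set \tilde I_x of infinite backward T-orbits of x avoiding multiples of 3:
   sequences s with s 0 = x, every s i positive and not divisible by 3,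
   and T (s (i+1)) = s i. *)
Definition in_Itilde (x : nat) (s : nat -> nat) : Prop :=
  s 0 = x /\
  (forall i, 0 < s i /\ ~~ (3 %| s i)) /\
  (forall i, T (s i.+1) = s i).

From mathcomp Require Import all_boot.
From mathcomp Require Import zify.
Set Implicit Arguments. Unset Strict Implicit. Unset Printing Implicit Defensive.

(* If T b = a then b = 2a, or b is odd with 3b + 1 = 2a.  For a
   not divisible by 3 this determines the residue of the preimage b modulo 9
   from that of a (when b is not divisible by 3 either):
     1 -> 2,   4 -> 8,   5 -> 1,   7 -> 5,
     8 -> 7, or else 2, 5, 8 with b < a (the odd branch).
   Hence along any backward T-orbit avoiding multiples of 3, the residues
   1, 5, 7 reach 2 in at most three steps, residue 8 reaches 7 or 2 or 5 or a
   strictly smaller element of residue 8 (so it reaches 2 by well-founded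
   induction on the value), and 4 reaches 8.  The file first proves the
   one-step transitions for a single preimage, then the propagation along an
   arbitrary backward orbit, from which the theorem follows at index 0. *)

Lemma T_preimage a b : T b = a -> b = 2 * a \/ 3 * b + 1 = 2 * a.
Proof.
rewrite /T; case ob: (odd b) => <-.
- right; have h := odd_double_half (3 * b + 1).
  have e : odd (3 * b + 1) = false by rewrite oddD oddM ob.
  rewrite e /= -muln2 in h; lia.
- left; have h := odd_double_half b; rewrite ob /= -muln2 in h; lia.
Qed.

(* One-step residue transitions modulo 9, for a preimage b of a with 3 not
   dividing b; in the cases 1, 4, 7 the odd branch is impossible mod 9, and in
   case 5 it would force 3 | b. *)
Section PreimageResidues.
Variables a b : nat.
Hypothesis Tba : T b = a.
Hypothesis b_n3 : ~~ (3 %| b).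

Lemma preimage_mod9_1 : a %% 9 = 1 -> b %% 9 = 2.
Proof. by case: (T_preimage Tba); lia. Qed.

Lemma preimage_mod9_4 : a %% 9 = 4 -> b %% 9 = 8.
Proof. by case: (T_preimage Tba); lia. Qed.

Lemma preimage_mod9_5 : a %% 9 = 5 -> b %% 9 = 1.
Proof. by move: b_n3; case: (T_preimage Tba); lia. Qed.

Lemma preimage_mod9_7 : a %% 9 = 7 -> b %% 9 = 5.
Proof. by case: (T_preimage Tba); lia. Qed.

(* Residue 8 is the only case where the odd branch survives; there the
   preimage is smaller than a, which makes the descent well founded. *)
Lemma preimage_mod9_8 : a %% 9 = 8 ->
  b %% 9 = 7 \/ b %% 9 = 2 \/ (b < a /\ (b %% 9 = 5 \/ b %% 9 = 8)).
Proof. by move: b_n3; case: (T_preimage Tba); lia. Qed.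

End PreimageResidues.

Lemma mod9_coprime3_cases a : ~~ (3 %| a) ->
  a %% 9 = 1 \/ a %% 9 = 2 \/ a %% 9 = 4 \/ a %% 9 = 5 \/
  a %% 9 = 7 \/ a %% 9 = 8.
Proof. lia. Qed.

Section BackwardOrbit.
Variable s : nat -> nat.
Hypothesis s_n3 : forall i, ~~ (3 %| s i).
Hypothesis s_T : forall i, T (s i.+1) = s i.

Definition hits_two_after (i : nat) : Prop :=
  exists2 j, i <= j & s j = 2 %[mod 9].

Lemma hits_two_afterS i : hits_two_after i.+1 -> hits_two_after i.
Proof. by case=> j lt_ij h2; exists j => //; apply: ltnW. Qed.

Lemma hits_from1 i : s i %% 9 = 1 -> hits_two_after i.
Proof. by move/(preimage_mod9_1 (s_T i) (s_n3 _)) => h; exists i.+1. Qed.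

Lemma hits_from5 i : s i %% 9 = 5 -> hits_two_after i.
Proof.
by move/(preimage_mod9_5 (s_T i) (s_n3 _))/hits_from1/hits_two_afterS.
Qed.

Lemma hits_from7 i : s i %% 9 = 7 -> hits_two_after i.
Proof.
by move/(preimage_mod9_7 (s_T i) (s_n3 _))/hits_from5/hits_two_afterS.
Qed.

Lemma hits_from8 i : s i %% 9 = 8 -> hits_two_after i.
Proof.
move Hn: (s i) => n; elim/ltn_ind: n i Hn => n IH i Hn h8.
apply: hits_two_afterS.
have := preimage_mod9_8 (s_T i) (s_n3 _); rewrite Hn.
case/(_ h8) => [h7 | [h2 | [lt_n [h5 | h8']]]].
- exact: hits_from7 h7.
- by exists i.+1.
- exact: hits_from5 h5.
- exact: IH lt_n i.+1 erefl h8'.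
Qed.

Lemma hits_from4 i : s i %% 9 = 4 -> hits_two_after i.
Proof.
by move/(preimage_mod9_4 (s_T i) (s_n3 _))/hits_from8/hits_two_afterS.
Qed.

Lemma backward_orbit_hits_two i : hits_two_after i.
Proof.
case: (mod9_coprime3_cases (s_n3 i)) => [h | [h | [h | [h | [h | h]]]]].
- exact: hits_from1 h.
- by exists i.
- exact: hits_from4 h.
- exact: hits_from5 h.
- exact: hits_from7 h.
- exact: hits_from8 h.
Qed.

End BackwardOrbit.

Theorem mainTheorem11 (x : nat) (hx : 0 < x) (hx3 : coprime x 3)
  (s : nat -> nat) (hs : in_Itilde x s) :
  exists i, s i = 2 %[mod 9].
Proof.
case: hs => _ [s_ok s_T].
have s_n3 i : ~~ (3 %| s i) by case: (s_ok i).
by case: (backward_orbit_hits_two s_n3 s_T 0) => j _ h2; exists j.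
Qed.
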